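(* Let $s>0$ and $k\ge1$. (Interior face.) Let $\gamma\in\mathcal F_h^I$ with adjacent elements $\tau^\pm=\tau^\pm(\gamma)$. Let $\theta_\gamma\ge0$ be such that for all $v\in V_h^{DG}$ $$\bigl|2(\{K\nabla v\}_\omega\cdot\nu_\gamma,[\![v]\!])_{0,\gamma}\bigr|\le\tfrac1s\bigl(a_{\tau^-}(v,v)+a_{\tau^+}(v,v)\bigr)+\theta_\gamma\|[\![v]\!]\|_{0,\gamma}^2,$$ and let $\sigma_\gamma>\theta_\gamma$. Then for all $v_1,\dots,v_k\in V_h^{DG}$, $$a^I_\gamma\Bigl(\sum_{i=1}^kv_i,\sum_{i=1}^kv_i\Bigr)\le k\frac{\sigma_\gamma+\theta_\gamma}{\sigma_\gamma-\theta_\gamma}\sum_{i=1}^ka^I_\gamma(v_i,v_i)+\frac ks\frac{2\sigma_\gamma}{\sigma_\gamma-\theta_\gamma}\sum_{i=1}^k\bigl(a_{\tau^-}(v_i,v_i)+a_{\tau^+}(v_i,v_i)\bigr).$$ (Dirichlet boundary face.) Let $\gamma\in\mathcal F_h^D$ with adjacent element $\tau^-$. Let $\theta_\gamma\ge0$ be such that for all $v\in V_h^{DG}$ $$\bigl|2((K\nabla v)\cdot\nu_\gamma,v)_{0,\gamma}\bigr|\le\tfrac1s a_{\tau^-}(v,v)+\theta_\gamma\|v\|_{0,\gamma}^2,$$ and let $\sigma_\gamma>\theta_\gamma$. Then for all $v_1,\dots,v_k\in V_h^{DG}$, $$a^D_\gamma\Bigl(\sum_iv_i,\sum_iv_i\Bigr)\le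 k\frac{\sigma_\gamma+\theta_\gamma}{\sigma_\gamma-\theta_\gamma}\sum_{i=1}^ka^D_\gamma(v_i,v_i)+\frac ks\frac{2\sigma_\gamma}{\sigma_\gamma-\theta_\gamma}\sum_{i=1}^ka_{\tau^-}(v_i,v_i).$$
   Context: Let $\Omega\subset\mathbb R^d$ be a bounded polyhedral domain with a shape-regular mesh $\mathcal T_h$ of open elements $\tau=\mu_\tau(\hat\tau)$, where $\hat\tau$ is the reference simplex or cube. Let $K$ be symmetric positive definite, bounded, and constant on each element. Let $\Gamma_D\subseteq\partial\Omega$. The DG space is $$V_h^{DG}=\{v\in L^2(\Omega): v|_\tau=p_\tau\circ\mu_\tau^{-1},\ p_\tau\in\mathbb P_k\},$$ where $\mathbb P_k$ is the space of polynomials of total degree $\le k$ on simplices, or of maximum degree $\le k$ on cubes. Faces: - An interior face $\gamma\in\mathcal F_h^I$ is a $(d-1)$-dimensional intersection $\overline{\tau^-(\gamma)}\cap\overline{\tau^+(\gamma)}$ of two elements, with unit normal $\nu_\gamma$ pointing from $\tau^-$ to $\tau^+$. - $\mathcal F_h^D$ denotes the $(d-1)$-dimensional intersections of one element $\tau^-(\gamma)$ with $\Gamma_D$; for these $\nu_\gamma$ is the outer unit normal of $\partial\Omega$. For $v\in V_h^{DG}$ let $v^\pm$ be the traces from $\tau^\pm$. Define the jump $[\![v]\!]=v^--v^+$ and the weighted average $\{w\}_\omega=\omega^-w^-+\omega^+w^+$ with weights $\omega^\pm\ge0$, $\omega^-+\omega^+=1$. Let $(v,w)_{0,\gamma}=\int_\gamma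 vw\,ds$ and $\|v\|_{0,\gamma}^2=(v,v)_{0,\gamma}$. Bilinear forms, with penalty parameters $\sigma_\gamma>0$: - $a_\tau(u,v)=\int_\tau(K\nabla u)\cdot\nabla v\,dx$; - $a^I_\gamma(u,v)=\sigma_\gamma([\![u]\!],[\![v]\!])_{0,\gamma}-(\{K\nabla u\}_\omega\cdot\nu_\gamma,[\![v]\!])_{0,\gamma}-(\{K\nabla v\}_\omega\cdot\nu_\gamma,[\![u]\!])_{0,\gamma}$; - $a^D_\gamma(u,v)=\sigma_\gamma(u,v)_{0,\gamma}-((K\nabla u)\cdot\nu_\gamma,v)_{0,\gamma}-((K\nabla v)\cdot\nu_\gamma,u)_{0,\gamma}$. *)

From HB Require Import structures.
From mathcomp Require Import all_boot all_order all_algebra.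
From mathcomp Require Import reals.
Set Implicit Arguments. Unset Strict Implicit. Unset Printing Implicit Defensive.
Import Order.TTheory GRing.Theory Num.Theory.
Local Open Scope ring_scope.

Section DGForms.
Variable R : realType.

Definition sym_bilinear (W : lmodType R) (b : W -> W -> R) : Prop :=
  (forall (a : R) (u v w : W), b (a *: u + v) w = a * b u w + b v w) /\
  (forall u v : W, b u v = b v u).

(* an element energy form  a_tau(u,v) = int_tau (K grad u).grad v  with K SPD:
   symmetric, bilinear, positive semidefinite on V_h^DG *)
Definition energy_form (V : lmodType R) (a : V -> V -> R) : Prop :=
  sym_bilinear a /\ (forall v, 0 <= a v v).

Variables (V F : lmodType R).
(* V = V_h^DG ; F = functions on the face gamma, with L2(gamma) inner
   product ip = (.,.)_{0,gamma} *)

Definition jump (trm trp : V -> F) (v : V) : F := trm v - trp v.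

Definition wavg (om_m om_p : R) (gm gp : V -> F) (v : V) : F :=
  om_m *: gm v + om_p *: gp v.

(* a^I_gamma ; flm/flp v = (K grad v)^{-/+} . nu_gamma restricted to gamma *)
Definition aI (ip : F -> F -> R) (sigma om_m om_p : R)
    (trm trp flm flp : V -> F) (u v : V) : R :=
  sigma * ip (jump trm trp u) (jump trm trp v)
  - ip (wavg om_m om_p flm flp u) (jump trm trp v)
  - ip (wavg om_m om_p flm flp v) (jump trm trp u).

(* a^D_gamma ; tr v = trace of v from tau^- on gamma, fl v = (K grad v).nu *)
Definition aD (ip : F -> F -> R) (sigma : R) (tr fl : V -> F) (u v : V) : R :=
  sigma * ip (tr u) (tr v) - ip (fl u) (tr v) - ip (fl v) (tr u).

End DGForms.

From HB Require Import structures.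
From mathcomp Require Import all_boot all_order all_algebra.
From mathcomp Require Import reals.
From mathcomp Require Import ring lra.
Import Order.TTheory GRing.Theory Num.Theory.
Local Open Scope ring_scope.

(* Both face forms have the shape  a(v,v) = sigma Q(v) - c(v), where
   Q(v) = ||[[v]]||^2 (resp. ||v||^2) is a positive semidefinite quadratic form
   and the consistency term satisfies |c(v)| <= E(v)/s + theta Q(v), with E the
   (positive semidefinite) element energy.  From this single hypothesis we get
     - boundedness:  a(v,v) <= (sigma + theta) Q(v) + E(v)/s,
     - coercivity:   (sigma - theta) Q(v) <= a(v,v) + E(v)/s,
   and every positive semidefinite symmetric bilinear form b satisfies
     b(sum v_i, sum v_i) <= k sum b(v_i, v_i).
   Applying boundedness to sum v_i, the k-bound to Q and E, and coercivity to
   each v_i gives the claim ([penalty_form_sum_le]). *)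

Section BilinearForms.
Context {R : realType}.

Section Basics.
Context {W : lmodType R} {b : W -> W -> R}.
Hypothesis hb : sym_bilinear b.

Lemma bilinearD u v w : b (u + v) w = b u w + b v w.
Proof. by have := (proj1 hb) 1 u v w; rewrite scale1r mul1r. Qed.

Lemma bilinear0 w : b 0 w = 0.
Proof. by have := bilinearD 0 0 w; rewrite addr0; lra. Qed.

Lemma bilinearN u w : b (- u) w = - b u w.
Proof.
by have := (proj1 hb) (-1) u 0 w; rewrite addr0 scaleN1r bilinear0 addr0 mulN1r.
Qed.

Lemma bilinear_sum k (vs : 'I_k -> W) w :
  b (\sum_(i < k) vs i) w = \sum_(i < k) b (vs i) w.
Proof. by elim/big_rec2: _ => [|i x y _ <-]; [exact: bilinear0 | exact: bilinearD]. Qed.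

End Basics.

Section Energy.
Context {W : lmodType R} {b : W -> W -> R}.
Hypothesis hb : energy_form b.

(* The arithmetic-geometric mean inequality for a semidefinite form,
   obtained by expanding  0 <= b(u - v, u - v). *)
Lemma energy_form_cross_le u v : 2 * b u v <= b u u + b v v.
Proof.
have [hbil hpos] := hb; have hsym := proj2 hbil.
have := hpos (u - v).
rewrite (bilinearD hbil) (bilinearN hbil) [b u _]hsym [b v _]hsym.
rewrite !(bilinearD hbil) !(bilinearN hbil) [b v u]hsym; lra.
Qed.

(* Expanding the square of a sum of k terms and bounding each cross term. *)
Lemma energy_form_sum_le k (vs : 'I_k -> W) :
  b (\sum_(i < k) vs i) (\sum_(i < k) vs i) <= k%:R * \sum_(i < k) b (vs i) (vs i).
Proof.
have [hbil _] := hb; have hsym := proj2 hbil.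
set S := \sum_(i < k) b (vs i) (vs i).
have double_sum : b (\sum_(i < k) vs i) (\sum_(i < k) vs i)
                  = \sum_(i < k) \sum_(j < k) b (vs i) (vs j).
  rewrite (bilinear_sum hbil); apply: eq_bigr => i _.
  by rewrite hsym (bilinear_sum hbil); apply: eq_bigr => j _; rewrite hsym.
have averaged : \sum_(i < k) \sum_(j < k) (b (vs i) (vs i) + b (vs j) (vs j))
                = (k%:R * S) *+ 2.
  under eq_bigr => i _ do rewrite big_split /= sumr_const card_ord.
  by rewrite big_split /= sumr_const card_ord sumrMnl -/S mulr_natl mulr2n.
suff : b (\sum_(i < k) vs i) (\sum_(i < k) vs i) *+ 2 <= (k%:R * S) *+ 2.
  by rewrite lerMn2r.
rewrite double_sum -averaged -sumrMnl; apply: ler_sum => i _.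
rewrite -sumrMnl; apply: ler_sum => j _.
by have := energy_form_cross_le (vs i) (vs j); rewrite mulr2n; lra.
Qed.

End Energy.

Lemma energy_formD {W : lmodType R} {a b : W -> W -> R} :
  energy_form a -> energy_form b -> energy_form (fun u v => a u v + b u v).
Proof.
move=> [[aL aS] aP] [[bL bS] bP]; split; last by move=> v; rewrite addr_ge0.
split=> [c u v w | u v]; last by rewrite aS bS.
by rewrite aL bL; ring.
Qed.

Lemma energy_form_comp {V W : lmodType R} {b : W -> W -> R} {f : V -> W} :
  (forall (c : R) u v, f (c *: u + v) = c *: f u + f v) ->
  energy_form b -> energy_form (fun u v => b (f u) (f v)).
Proof.
move=> fL [[bL bS] bP]; split=> //; split=> [c u v w | u v]; last exact: bS.
by rewrite fL bL.
Qed.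

End BilinearForms.

Section PenaltyForms.
Context {R : realType}.

(* The closing arithmetic: combine boundedness of the sum, the k-bounds for
   Q and E, and coercivity summed over the v_i, then eliminate sum Q(v_i). *)
Lemma penalty_combine (k s sg th aS QS ES SQ SA SE : R) :
  0 <= k -> 0 < s -> 0 <= th -> th < sg ->
  aS <= (sg + th) * QS + s^-1 * ES ->
  QS <= k * SQ -> ES <= k * SE ->
  (sg - th) * SQ <= SA + s^-1 * SE ->
  aS <= k * ((sg + th) / (sg - th)) * SA + k / s * (2 * sg / (sg - th)) * SE.
Proof.
move=> hk hs hth hsg hsum hQ hE hcoer.
have hd : 0 < sg - th by rewrite subr_gt0.
have hSQ : SQ <= (sg - th)^-1 * (SA + s^-1 * SE) by rewrite ler_pdivlMl.
have hQS : QS <= k * ((sg - th)^-1 * (SA + s^-1 * SE)).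
  by apply: (le_trans hQ); rewrite ler_wpM2l.
have hES : s^-1 * ES <= s^-1 * (k * SE) by rewrite ler_wpM2l // invr_ge0 ltW.
have -> : k * ((sg + th) / (sg - th)) * SA + k / s * (2 * sg / (sg - th)) * SE
        = (sg + th) * (k * ((sg - th)^-1 * (SA + s^-1 * SE))) + s^-1 * (k * SE).
  by field; rewrite subr_eq0 !gt_eqF.
have : (sg + th) * QS <= (sg + th) * (k * ((sg - th)^-1 * (SA + s^-1 * SE))).
  by rewrite ler_wpM2l //; lra.
lra.
Qed.

Section Penalty.
Context {W : lmodType R} {s sg th : R} {Q E a c : W -> R}.
Hypotheses (hs : 0 < s) (hth : 0 <= th) (hsg : th < sg).
Hypothesis ha : forall v, a v = sg * Q v - c v.
Hypothesis hc : forall v, `|c v| <= s^-1 * E v + th * Q v.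

Lemma penalty_form_bounded v : a v <= (sg + th) * Q v + s^-1 * E v.
Proof. by have := hc v; rewrite ler_norml ha => /andP[]; lra. Qed.

Lemma penalty_form_coercive v : (sg - th) * Q v <= a v + s^-1 * E v.
Proof. by have := hc v; rewrite ler_norml ha => /andP[]; lra. Qed.

Lemma penalty_form_sum_le k (vs : 'I_k -> W) :
  Q (\sum_(i < k) vs i) <= k%:R * \sum_(i < k) Q (vs i) ->
  E (\sum_(i < k) vs i) <= k%:R * \sum_(i < k) E (vs i) ->
  a (\sum_(i < k) vs i) <= k%:R * ((sg + th) / (sg - th)) * (\sum_(i < k) a (vs i))
     + k%:R / s * (2 * sg / (sg - th)) * (\sum_(i < k) E (vs i)).
Proof.
move=> hQ hE; apply: penalty_combine hQ hE _ => //.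
  exact: penalty_form_bounded.
rewrite !mulr_sumr -big_split /=; apply: ler_sum => i _.
exact: penalty_form_coercive.
Qed.

End Penalty.
End PenaltyForms.

Theorem lemma3p20 (R : realType) (V F : lmodType R) (s : R) (k : nat) :
  0 < s -> (0 < k)%N ->
  (* interior face *)
  (forall (ip : F -> F -> R) (atm atp : V -> V -> R)
          (trm trp flm flp : {linear V -> F}) (om_m om_p theta sigma : R),
     sym_bilinear ip -> (forall f, 0 <= ip f f) ->
     energy_form atm -> energy_form atp ->
     0 <= om_m -> 0 <= om_p -> om_m + om_p = 1 ->
     0 <= theta ->
     (forall v : V,
        `|2 * ip (wavg om_m om_p flm flp v) (jump trm trp v)|
          <= s^-1 * (atm v v + atp v v)
             + theta * ip (jump trm trp v) (jump trm trp v)) ->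
     theta < sigma ->
     forall vs : 'I_k -> V,
       aI ip sigma om_m om_p trm trp flm flp (\sum_(i < k) vs i) (\sum_(i < k) vs i)
       <= k%:R * ((sigma + theta) / (sigma - theta))
            * (\sum_(i < k) aI ip sigma om_m om_p trm trp flm flp (vs i) (vs i))
          + k%:R / s * (2 * sigma / (sigma - theta))
            * (\sum_(i < k) (atm (vs i) (vs i) + atp (vs i) (vs i))))
  /\
  (* Dirichlet boundary face *)
  (forall (ip : F -> F -> R) (atm : V -> V -> R)
          (tr fl : {linear V -> F}) (theta sigma : R),
     sym_bilinear ip -> (forall f, 0 <= ip f f) ->
     energy_form atm ->
     0 <= theta ->
     (forall v : V,
        `|2 * ip (fl v) (tr v)| <= s^-1 * atm v v + theta * ip (tr v) (tr v)) ->
     theta < sigma ->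
     forall vs : 'I_k -> V,
       aD ip sigma tr fl (\sum_(i < k) vs i) (\sum_(i < k) vs i)
       <= k%:R * ((sigma + theta) / (sigma - theta))
            * (\sum_(i < k) aD ip sigma tr fl (vs i) (vs i))
          + k%:R / s * (2 * sigma / (sigma - theta))
            * (\sum_(i < k) atm (vs i) (vs i))).
Proof.
move=> hs _; split.
- move=> ip atm atp trm trp flm flp om_m om_p theta sigma hip hipos hm hp _ _ _
    hth hc hsg vs.
  have jumpL c u v : jump trm trp (c *: u + v) = c *: jump trm trp u + jump trm trp v.
    by rewrite /jump (linearP trm) (linearP trp) scalerBr opprD addrACA.
  have hQ := energy_form_comp jumpL (conj hip hipos).
  have hE := energy_formD hm hp.
  apply: (penalty_form_sum_le
    (a := fun v => aI ip sigma om_m om_p trm trp flm flp v v)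
    (Q := fun v => ip (jump trm trp v) (jump trm trp v))
    (E := fun v => atm v v + atp v v)
    (c := fun v => 2 * ip (wavg om_m om_p flm flp v) (jump trm trp v))) => //.
  + by move=> v; rewrite /aI; ring.
  + exact: (energy_form_sum_le hQ).
  + exact: (energy_form_sum_le hE).
- move=> ip atm tr fl theta sigma hip hipos hm hth hc hsg vs.
  have hQ := energy_form_comp (fun c u v => linearP tr c u v) (conj hip hipos).
  apply: (penalty_form_sum_le (a := fun v => aD ip sigma tr fl v v)
    (Q := fun v => ip (tr v) (tr v)) (E := fun v => atm v v)
    (c := fun v => 2 * ip (fl v) (tr v))) => //.
  + by move=> v; rewrite /aD; ring.
  + exact: (energy_form_sum_le hQ).
  + exact: (energy_form_sum_le hm).
Qed.
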